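(* For a connected hypergraph $\mathcal{G}=(V,E)$ on $n$ vertices, $$\operatorname{diam}(\mathcal{G})\ge\frac{4}{n\,(r(\mathcal{G})-1)\,\lambda_2(L_{\mathcal{G}})}.$$
   Context: A hypergraph $\mathcal{G}=(V,E)$ has a finite vertex set $V$ and a set $E$ of subsets of $V$ (edges), each of cardinality at least $2$. The rank $r(\mathcal{G})$ is the maximum edge cardinality. The degree $d_i$ is the number of edges containing $i$. The Laplacian $L_{\mathcal{G}}$ has $(L_{\mathcal{G}})_{ii}=d_i$ and $(L_{\mathcal{G}})_{ij}=-\sum_{e\in E,\, i,j\in e}\frac{1}{|e|-1}$ for $i\ne j$; $\lambda_2(L_{\mathcal{G}})$ is its second smallest eigenvalue. A path of length $l$ between $v_0,v_l$ is an alternating sequence $v_0e_1v_1\dots e_lv_l$ of distinct vertices and distinct edges with $v_{i-1},v_i\in e_i$; $d(i,j)$ is the minimum length of an $i$–$j$ path and $\operatorname{diam}(\mathcal{G})=\max_{i,j}d(i,j)$; connected means all distances are finite. *)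

From mathcomp Require Import all_boot all_order all_algebra.
From mathcomp Require Import reals.
Set Implicit Arguments. Unset Strict Implicit. Unset Printing Implicit Defensive.
Import Order.TTheory GRing.Theory Num.Theory.
Local Open Scope ring_scope.

Definition hypergraph (n : nat) (E : {set {set 'I_n}}) : Prop :=
  forall e, e \in E -> (2 <= #|e|)%N.

Definition hrank (n : nat) (E : {set {set 'I_n}}) : nat := \max_(e in E) #|e|.

Definition hdeg (n : nat) (E : {set {set 'I_n}}) (i : 'I_n) : nat :=
  #|[set e in E | i \in e]|.

Definition hlaplacian (R : realType) (n : nat) (E : {set {set 'I_n}}) : 'M[R]_n :=
  \matrix_(i, j) (if i == j then (hdeg E i)%:R
                  else - \sum_(e in E | (i \in e) && (j \in e)) ((#|e| - 1)%:R)^-1).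

Definition hpath (n : nat) (E : {set {set 'I_n}}) (k : nat) (u v : 'I_n) : bool :=
  [exists vs : k.+1.-tuple 'I_n, exists es : k.-tuple {set 'I_n},
     [&& uniq vs, uniq es, nth u vs 0 == u, nth u vs k == v &
       [forall m : 'I_k,
          [&& nth set0 es m \in E, nth u vs m \in nth set0 es m &
              nth u vs m.+1 \in nth set0 es m]]]].

Definition hconnected (n : nat) (E : {set {set 'I_n}}) : Prop :=
  forall u v : 'I_n, exists k, hpath E k u v.

(* Any path has length < n (its
   vertices are distinct), so the minimum over k < n is the true minimum
   whenever a path exists (the value n is only returned when none exists). *)
Definition hdist (n : nat) (E : {set {set 'I_n}}) (u v : 'I_n) : nat :=
  \big[minn/n]_(k < n | hpath E k u v) k.

Definition hdiam (n : nat) (E : {set {set 'I_n}}) : nat :=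
  \max_(u : 'I_n) \max_(v : 'I_n) hdist E u v.

From mathcomp Require Import all_boot all_order all_algebra.
From mathcomp Require Import reals.
From mathcomp Require Import ring lra.
Set Implicit Arguments.
Unset Strict Implicit.
Unset Printing Implicit Defensive.

Import Order.TTheory GRing.Theory Num.Theory.
Local Open Scope ring_scope.

(* Let x be an eigenvector of L for an eigenvalue l <> 0.  The rows of L sum
   to zero, so x sums to zero, and x L x^T = l |x|^2 is the Dirichlet energy
   sum_e (|e| - 1)^-1 sum_{i<j in e} (x_i - x_j)^2.  Since x sums to zero,
   4 |x|^2 <= n (max x - min x)^2.  Along a shortest path of length d <= diam
   from the argmin to the argmax of x, Cauchy-Schwarz bounds (max x - min x)^2
   by d times the sum of the squared increments; each increment is a pair
   inside a distinct edge e, whose weight (|e| - 1)^-1 is at least 1/(r - 1).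
   Hence (max x - min x)^2 <= d (r - 1) l |x|^2. *)

Section PairSqdiff.
Variables (R : realDomainType) (I : finType).
Implicit Types (A B : {pred I}) (a : I -> R).

(* By Lagrange's identity [pair_sqdiffE], the sum of (a i - a j)^2 over the
   unordered pairs {i, j} of A. *)
Definition pair_sqdiff A a :=
  #|A|%:R * \sum_(i in A) a i ^+ 2 - (\sum_(i in A) a i) ^+ 2.

Lemma pair_sqdiffE A a :
  pair_sqdiff A a *+ 2 = \sum_(i in A) \sum_(j in A) (a i - a j) ^+ 2.
Proof.
have expand i : \sum_(j in A) (a i - a j) ^+ 2 =
    #|A|%:R * a i ^+ 2 - (a i * \sum_(j in A) a j) *+ 2 + \sum_(j in A) a j ^+ 2.
  rewrite mulr_natl -sumr_const mulr_sumr -sumrMnl -!sumrB -big_split /=.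
  by apply: eq_bigr => j _; rewrite sqrrB.
rewrite (eq_bigr _ (fun i _ => expand i)) big_split /= sumrB.
rewrite sumr_const sumrMnl -!mulr_sumr -mulr_suml -expr2 /pair_sqdiff.
ring.
Qed.

Lemma ler_sum_subset A B (F : I -> R) :
  A \subset B -> {in B, forall i, 0 <= F i} ->
  \sum_(i in A) F i <= \sum_(i in B) F i.
Proof.
move=> /subsetP AB F0; rewrite [leRHS](bigID [in A]) /=.
rewrite [X in _ <= X + _](eq_bigl [in A]) ?lerDl.
  by apply: sumr_ge0 => i /andP[/F0].
by move=> i /=; apply/andP/idP => [[]//|iA]; split=> //; apply: AB.
Qed.

Lemma pair_sqdiff_ge0 A a : 0 <= pair_sqdiff A a.
Proof.
rewrite -(pmulrn_lge0 _ (isT : 0 < 2)%N) pair_sqdiffE.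
by do 2!apply: sumr_ge0 => ? _; apply: sqr_ge0.
Qed.

Lemma pair_sqdiffS A B a : A \subset B -> pair_sqdiff A a <= pair_sqdiff B a.
Proof.
move=> AB; rewrite -(ler_pMn2r (isT : 0 < 2)%N) !pair_sqdiffE.
apply: (@le_trans _ _ (\sum_(i in A) \sum_(j in B) (a i - a j) ^+ 2)).
  by apply: ler_sum => i _; apply: ler_sum_subset => // j _; apply: sqr_ge0.
by apply: ler_sum_subset => // i _; apply: sumr_ge0 => j _; apply: sqr_ge0.
Qed.

Lemma pair_sqdiff_set2 p q a : p != q -> pair_sqdiff [set p; q] a = (a p - a q) ^+ 2.
Proof.
move=> pq; have pNq : p \notin [set q] by rewrite in_set1.
rewrite /pair_sqdiff cards2 pq !big_setU1 //= !big_set1; ring.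
Qed.

Lemma pair_sqdiff_le A a p q : p \in A -> q \in A ->
  (a p - a q) ^+ 2 <= pair_sqdiff A a.
Proof.
move=> pA qA; have [<-|pq] := eqVneq p q; first by rewrite subrr expr0n pair_sqdiff_ge0.
rewrite -pair_sqdiff_set2 //; apply: pair_sqdiffS.
by apply/subsetP => i; rewrite !inE => /orP[]/eqP->.
Qed.

Lemma sqr_sum_le_card A a :
  (\sum_(i in A) a i) ^+ 2 <= #|A|%:R * \sum_(i in A) a i ^+ 2.
Proof. by rewrite -subr_ge0; apply: pair_sqdiff_ge0. Qed.

Lemma sum_sqr_le_range a m M : \sum_i a i = 0 -> (forall i, m <= a i <= M) ->
  4 * \sum_i a i ^+ 2 <= #|I|%:R * (M - m) ^+ 2.
Proof.
move=> a0 amM.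
have : \sum_i (M - a i) * (a i - m) >= 0.
  apply: sumr_ge0 => i _; have /andP[mi iM] := amM i.
  by apply: mulr_ge0; rewrite subr_ge0.
have expand i : (M - a i) * (a i - m) = (M + m) * a i - M * m - a i ^+ 2 by ring.
rewrite (eq_bigr _ (fun i _ => expand i)) !sumrB sumr_const -mulr_sumr a0.
rewrite mulr0 sub0r -mulr_natl (eq_card (B := I)) // => sum_ge0.
have -> : #|I|%:R * (M - m) ^+ 2 = #|I|%:R * (M + m) ^+ 2 - 4 * (#|I|%:R * (M * m)) by ring.
have := mulr_ge0 (ler0n R #|I|) (sqr_ge0 (M + m)); lra.
Qed.

End PairSqdiff.

Section EdgeLaplacian.
Variables (R : realType) (n : nat).
Implicit Types (e : {set 'I_n}) (E : {set {set 'I_n}}) (x : 'rV[R]_n).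

Definition indicator e : 'rV[R]_n := \row_i (i \in e)%:R.

Definition edge_laplacian e : 'M[R]_n :=
  (#|e| - 1)%:R^-1 *: (#|e|%:R *: diag_mx (indicator e) - (indicator e)^T *m indicator e).

Lemma edge_laplacianE e i j : edge_laplacian e i j =
  (#|e| - 1)%:R^-1 * ((i \in e)%:R * (#|e|%:R * (i == j)%:R - (j \in e)%:R)).
Proof.
rewrite !mxE big_ord1 !mxE; congr (_ * _).
by case: eqP => [->|_]; rewrite ?mulr1n ?mulr0n; ring.
Qed.

Lemma mul_indicator_tr x e : (x *m (indicator e)^T) 0 0 = \sum_(i in e) x 0 i.
Proof.
rewrite mxE [RHS]big_mkcond /=; apply: eq_bigr => i _; rewrite !mxE.
by case: (i \in e); rewrite ?mulr1 ?mulr0.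
Qed.

Lemma sum_indicator e : \sum_i indicator e 0 i = #|e|%:R.
Proof.
rewrite -sumr_const [RHS]big_mkcond /=; apply: eq_bigr => i _; rewrite mxE.
by case: (i \in e).
Qed.

Lemma edge_laplacian_form x e :
  (x *m edge_laplacian e *m x^T) 0 0 = (#|e| - 1)%:R^-1 * pair_sqdiff e (x 0).
Proof.
rewrite /edge_laplacian -scalemxAr -scalemxAl mxE; congr (_ * _).
rewrite mulmxBr mulmxBl mxE -scalemxAr -scalemxAl mxE.
have diag_form : (x *m diag_mx (indicator e) *m x^T) 0 0 = \sum_(i in e) x 0 i ^+ 2.
  rewrite mul_mx_diag mxE [RHS]big_mkcond; apply: eq_bigr => i _; rewrite !mxE.
  by case: (i \in e); rewrite ?mulr1 ?mulr0 ?mul0r.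
have rank1_form : (x *m ((indicator e)^T *m indicator e) *m x^T) 0 0 =
    (\sum_(i in e) x 0 i) ^+ 2.
  rewrite mulmxA -mulmxA -{2}[indicator e]trmxK -trmx_mul [LHS]mxE big_ord1.
  by rewrite [X in _ * X]mxE mul_indicator_tr expr2.
by rewrite diag_form [X in _ + X]mxE rank1_form.
Qed.

Lemma edge_laplacian_mul_const e : edge_laplacian e *m (const_mx 1 : 'cV_n) = 0.
Proof.
have diag1 : diag_mx (indicator e) *m const_mx 1 = (indicator e)^T.
  by apply/matrixP => i j; rewrite mul_diag_mx !mxE mulr1.
have row1 : indicator e *m const_mx 1 = #|e|%:R%:M.
  apply/matrixP => i j; rewrite !ord1 !mxE mulr1n -sum_indicator.
  by apply: eq_bigr => k _; rewrite [const_mx _ _ _]mxE mulr1.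
rewrite /edge_laplacian -[LHS]scalemxAl mulmxBl -scalemxAl -mulmxA diag1 row1.
by rewrite mul_mx_scalar subrr scaler0.
Qed.

Lemma hlaplacianE E : hypergraph E ->
  hlaplacian R E = \sum_(e in E) edge_laplacian e.
Proof.
move=> hE; apply/matrixP => i j; rewrite summxE !mxE.
rewrite (eq_bigr _ (fun e _ => edge_laplacianE e i j)).
have [<-|ij] := eqVneq i j; last first.
  rewrite -sumrN big_mkcondr; apply: eq_bigr => e _.
  by case: (i \in e); case: (j \in e); rewrite /= ?mulr0 ?mul0r ?oppr0 //; ring.
rewrite /hdeg -sumr_const big_mkcond [RHS]big_mkcond; apply: eq_bigr => e _.
rewrite inE; case eE: (e \in E); case: (i \in e) => //=; rewrite ?mul0r ?mulr0 //.
rewrite mul1r mulr1 -natrB; last by rewrite ltnW // hE.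
by rewrite mulVf // pnatr_eq0 subn_eq0 -ltnNge hE.
Qed.
End EdgeLaplacian.

Section Eigenvectors.
Variables (R : comPzRingType) (n : nat) (M : 'M[R]_n) (x : 'rV[R]_n) (l : R).
Hypothesis xM : x *m M = l *: x.

Lemma eigen_form : (x *m M *m x^T) 0 0 = l * \sum_i x 0 i ^+ 2.
Proof.
rewrite xM -scalemxAl !mxE; congr (_ * _).
by apply: eq_bigr => i _; rewrite mxE expr2.
Qed.

Lemma eigen_sum0 : M *m (const_mx 1 : 'cV_n) = 0 -> l * \sum_i x 0 i = 0.
Proof.
move=> M1; have := congr1 (fun A => (A *m (const_mx 1 : 'cV_n)) 0 0) xM.
have sum1 : \sum_j x 0 j * (const_mx 1 : 'cV_n) j 0 = \sum_j x 0 j.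
  by apply: eq_bigr => j _; rewrite mxE mulr1.
by rewrite /= -mulmxA M1 mulmx0 -scalemxAl !mxE sum1 => /esym.
Qed.

End Eigenvectors.

Section HypergraphDirichlet.
Variables (R : realType) (n : nat) (E : {set {set 'I_n}}).
Hypothesis hE : hypergraph E.

Definition hdirichlet (a : 'I_n -> R) : R :=
  \sum_(e in E) (#|e| - 1)%:R^-1 * pair_sqdiff e a.

Lemma hlaplacian_form (x : 'rV[R]_n) :
  (x *m hlaplacian R E *m x^T) 0 0 = hdirichlet (x 0).
Proof.
rewrite hlaplacianE // mulmx_sumr mulmx_suml summxE.
by apply: eq_bigr => e _; apply: edge_laplacian_form.
Qed.

Lemma hlaplacian_mul_const : hlaplacian R E *m (const_mx 1 : 'cV_n) = 0.
Proof.
by rewrite hlaplacianE // mulmx_suml big1 // => e _; apply: edge_laplacian_mul_const.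
Qed.

Lemma edge_weight_ge1 e : e \in E -> 1 <= ((hrank E)%:R - 1) / (#|e| - 1)%:R :> R.
Proof.
move=> eE; have e_ge2 := hE eE.
rewrite ler_pdivlMr ?ltr0n ?subn_gt0 // mul1r (natrB _ (ltnW e_ge2)) lerD2r ler_nat.
exact: (@leq_bigmax_cond _ (mem E) (fun e => #|e|) e eE).
Qed.

Lemma hpath_sqdiff_le (a : 'I_n -> R) d u v : hpath E d u v ->
  (a v - a u) ^+ 2 <= d%:R * (((hrank E)%:R - 1) * hdirichlet a).
Proof.
move=> /existsP[vs /existsP[es /and5P[uniq_vs uniq_es /eqP vs0 /eqP vsd /forallP step]]].
pose p m := nth u vs m.
pose g (e : {set 'I_n}) := ((hrank E)%:R - 1) * ((#|e| - 1)%:R^-1 * pair_sqdiff e a).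
have g_ge0 : {in E, forall e, 0 <= g e}.
  move=> e eE; rewrite /g mulrA; apply: mulr_ge0; last exact: pair_sqdiff_ge0.
  exact: le_trans ler01 (edge_weight_ge1 eE).
have telescope : a v - a u = \sum_(m < d) (a (p m.+1) - a (p m)).
  by rewrite -(big_mkord xpredT (fun m => a (p m.+1) - a (p m))) telescope_sumr // /p vs0 vsd.
have step_le (m : 'I_d) : (a (p m.+1) - a (p m)) ^+ 2 <= g (nth set0 es m).
  have /and3P[eE pe qe] := step m.
  apply: le_trans (pair_sqdiff_le a qe pe) _.
  rewrite /g mulrA -[X in X <= _]mul1r ler_wpM2r ?pair_sqdiff_ge0 //.
  exact: edge_weight_ge1.
have path_edges : \sum_(m < d) g (nth set0 es m) <= \sum_(e in E) g e.
  have -> : \sum_(m < d) g (nth set0 es m) = \sum_(e <- es) g e.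
    by rewrite big_tuple; apply: eq_bigr => m _; rewrite (tnth_nth set0).
  rewrite big_uniq //; apply: ler_sum_subset g_ge0.
  apply/subsetP => e /(nthP set0)[m]; rewrite size_tuple => md <-.
  by have /and3P[] := step (Ordinal md).
rewrite telescope; apply: le_trans (sqr_sum_le_card 'I_d _) _.
rewrite card_ord ler_wpM2l // /hdirichlet mulr_sumr; apply: le_trans path_edges.
by apply: ler_sum => m _; apply: step_le.
Qed.

End HypergraphDirichlet.

Section Distance.
Variables (n : nat) (E : {set {set 'I_n}}).

Lemma hpath_length_lt k u v : hpath E k u v -> (k < n)%N.
Proof.
move=> /existsP[vs /existsP[_ /andP[/card_uniqP card_vs _]]].
by have := max_card (mem vs); rewrite card_ord card_vs size_tuple.
Qed.

Lemma hdist_path u v : hconnected E -> exists2 d, hpath E d u v & (d <= hdist E u v)%N.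
Proof.
move=> /(_ u v)[k uv_path]; rewrite /hdist.
apply: (big_ind (fun y => exists2 d, hpath E d u v & (d <= y)%N)).
- by exists k => //; apply/ltnW/(hpath_length_lt uv_path).
- move=> y z [d1 path1 le1] [d2 path2 le2]; rewrite /minn.
  by case: ifP => _; [exists d1 | exists d2].
- by move=> k' path'; exists k'.
Qed.

Lemma hdist_le_hdiam u v : (hdist E u v <= hdiam E)%N.
Proof.
apply: leq_trans (@leq_bigmax _ (fun v => hdist E u v) v) _.
exact: (@leq_bigmax _ (fun u => \max_v hdist E u v) u).
Qed.

End Distance.

Lemma hdiam_ge_eigenvalue (R : realType) n (E : {set {set 'I_n}}) (l : R) :
  hypergraph E -> hconnected E -> eigenvalue (hlaplacian R E) l ->
  4 / (n%:R * ((hrank E)%:R - 1) * l) <= (hdiam E)%:R.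
Proof.
move=> hE hc /eigenvalueP[x xL x0].
set r1 := (hrank E)%:R - 1; set D := n%:R * r1 * l.
(* Covers l = 0, where 4 / 0 = 0. *)
have [D_le0|D_gt0] := lerP D 0.
  by apply: le_trans (ler0n _ _); rewrite mulr_ge0_le0 ?invr_le0.
have n_gt0 : (0 < n)%N.
  by rewrite lt0n; apply: contraTneq D_gt0 => n0; rewrite /D n0 !mul0r ltxx.
pose i0 := Ordinal n_gt0.
set a := x 0; set S := \sum_i a i ^+ 2.
have S_gt0 : 0 < S.
  rewrite lt0r sumr_ge0 ?andbT => [|i _]; last exact: sqr_ge0.
  apply: contraNneq x0 => /(psumr_eq0P (fun i _ => sqr_ge0 (a i))) a0.
  by apply/eqP/rowP => i; rewrite mxE; apply/eqP; rewrite -sqrf_eq0 a0.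
have energy : hdirichlet E a = l * S by rewrite -hlaplacian_form // (eigen_form xL).
have a_sum0 : \sum_i a i = 0.
  have /eqP := eigen_sum0 xL (hlaplacian_mul_const R hE).
  by rewrite mulf_eq0 => /orP[/eqP l0|/eqP //]; move: D_gt0; rewrite /D l0 mulr0 ltxx.
have [u _ u_max] := arg_maxP a (isT : xpredT i0).
have [v _ v_min] := arg_minP a (isT : xpredT i0).
have [d vu_path d_le] := hdist_path v u hc.
have a_range i : a v <= a i <= a u by apply/andP; split; [exact: v_min | exact: u_max].
have : 4 * S <= (hdiam E)%:R * D * S.
  apply: le_trans (sum_sqr_le_range a_sum0 a_range) _; rewrite card_ord.
  apply: le_trans (ler_wpM2l (ler0n _ n) (hpath_sqdiff_le hE a vu_path)) _.
  rewrite energy (_ : _ * (d%:R * _) = d%:R * D * S); last by rewrite /D /r1; ring.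
  rewrite ler_wpM2r ?(ltW S_gt0) // ler_wpM2r ?(ltW D_gt0) // ler_nat.
  exact: leq_trans d_le (hdist_le_hdiam E v u).
by rewrite ler_pM2r // ler_pdivrMr.
Qed.

Theorem theorem9 (R : realType) (n : nat) (E : {set {set 'I_n}})
  (l : 'I_n -> R) (i1 : 'I_n) :
  (2 <= n)%N -> hypergraph E -> hconnected E ->
  (forall i j : 'I_n, (i <= j)%N -> l i <= l j) ->
  char_poly (hlaplacian R E) = \prod_(i < n) ('X - (l i)%:P) ->
  val i1 = 1%N ->
  4 / (n%:R * ((hrank E)%:R - 1) * l i1) <= (hdiam E)%:R.
Proof.
(* The bound holds for every eigenvalue. *)
move=> _ hE hc _ char_l _; apply: hdiam_ge_eigenvalue => //.
by rewrite eigenvalue_root_char char_l /root horner_prod (bigD1 i1) //= hornerXsubC subrr mul0r.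
Qed.
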